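(* Let $S$ be a finite set of terms, let $t, r$ be terms with $S \vdash_{dy} r$, and let $x \in \mathscr{V}$ be a variable with $x \notin \mathrm{vars}(S)$. Put $P = \mathrm{pos}_x(t)$, and suppose $P \subseteq \mathbb{A}(S \cup \{x\}, t)$. Then $$\mathbb{A}\bigl(S, t[P \mapsto r]\bigr) \cap \mathrm{Pos}(t) = \mathbb{A}(S \cup \{x\}, t).$$
   Context: Terms. Fix a set $\mathscr{N}$ of names (atoms), a set $\mathscr{V}$ of variables, and keys $\mathscr{K} \subseteq \mathscr{N}$, where each $k \in \mathscr{K}$ has an inverse $k^{-1} \in \mathscr{K}$. Terms are generated by $t ::= x \mid m \mid (t,u) \mid \mathsf{enc}(t,k)$, with $x \in \mathscr{V}$, $m \in \mathscr{N}$, $k \in \mathscr{K} \cup \mathscr{V}$; we write $\{t\}_k$ for $\mathsf{enc}(t,k)$. $\mathrm{vars}(t)$ is the set of variables of $t$, and for a set $S$ of terms $\mathrm{vars}(S) = \bigcup_{s \in S} \mathrm{vars}(s)$. Dolev–Yao derivability. For a set of terms $X$, $X \vdash_{dy} t$ means that $X \vdash t$ is derivable using the following rules: - ax: $X \vdash t$ for $t \in X$; - fst / snd: from $X \vdash (t,u)$ infer $X \vdash t$, respectively $X \vdash u$; - pair: from $X \vdash t$ and $X \vdash u$ infer $X \vdash (t,u)$; - dec: from $X \vdash \{t\}_k$ and $X \vdash k^{-1}$ infer $X \vdash t$; - enc: from $X \vdash t$ and $X \vdash k$ infer $X \vdash \{t\}_k$. Positions. For $m \in \mathscr{N} \cup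 \mathscr{V}$, $\mathrm{Pos}(m) = \{\varepsilon\}$. For $\mathsf{f} \in \{\text{pairing}, \mathsf{enc}\}$, $\mathrm{Pos}(\mathsf{f}(t,u)) = \{\varepsilon\} \cup \{0p : p \in \mathrm{Pos}(t)\} \cup \{1p : p \in \mathrm{Pos}(u)\}$. For $p \in \mathrm{Pos}(t)$, $t|_p$ denotes the subterm of $t$ at position $p$. We write $\mathrm{pos}_x(t) = \{p \in \mathrm{Pos}(t) : t|_p = x\}$. For $P \subseteq \mathrm{Pos}(t)$, $t[P \mapsto r]$ is obtained from $t$ by replacing the subterm at every $p \in P$ by $r$. Abstractable positions. For $p \in \mathrm{Pos}(t)$, let $\mathbb{Q}_p = \{\varepsilon\} \cup \{qi \in \mathrm{Pos}(t) : q \text{ a proper prefix of } p,\ i \in \{0,1\}\}$. Then $\mathbb{A}(S,t) = \{p \in \mathrm{Pos}(t) : S \vdash_{dy} t|_q \text{ for all } q \in \mathbb{Q}_p\}$. *)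

From mathcomp Require Import all_boot.
From Stdlib Require Import List.
Import ListNotations.

Set Implicit Arguments.
Unset Strict Implicit.

Section DY.
Variables (N : Type) (V : eqType) (isKey : N -> Prop) (inv : N -> N).

(* Terms. The key argument of enc is an arbitrary term syntactically; the grammar of the paper is captured by [wf]. *)
Inductive term :=
| Var of V
| Name of N
| Pair of term & term
| Enc of term & term.

Fixpoint wf (t : term) : Prop :=
  match t with
  | Var _ | Name _ => True
  | Pair a b => wf a /\ wf b
  | Enc a k => wf a /\ ((exists k0, k = Name k0 /\ isKey k0) \/ (exists y, k = Var y))
  end.

Fixpoint occurs (x : V) (t : term) : Prop :=
  match t with
  | Var y => x = y
  | Name _ => False
  | Pair a b | Enc a b => occurs x a \/ occurs x b
  end.

Inductive dy (X : term -> Prop) : term -> Prop :=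
| dy_ax t : X t -> dy X t
| dy_fst t u : dy X (Pair t u) -> dy X t
| dy_snd t u : dy X (Pair t u) -> dy X u
| dy_pair t u : dy X t -> dy X u -> dy X (Pair t u)
| dy_dec t k : isKey k -> dy X (Enc t (Name k)) -> dy X (Name (inv k)) -> dy X t
| dy_enc t k : dy X t -> dy X k -> dy X (Enc t k).

(* Positions: lists of bits, false = 0, true = 1. *)
Definition position := list bool.

Fixpoint subterm_at (t : term) (p : position) : option term :=
  match p, t with
  | [], _ => Some t
  | false :: p', Pair a _ | false :: p', Enc a _ => subterm_at a p'
  | true :: p', Pair _ b | true :: p', Enc _ b => subterm_at b p'
  | _ :: _, _ => None
  end.

Definition inPos (t : term) (p : position) : Prop := subterm_at t p <> None.

Fixpoint is_var_at (x : V) (t : term) (p : position) : bool :=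
  match p, t with
  | [], Var y => y == x
  | [], _ => false
  | false :: p', Pair a _ | false :: p', Enc a _ => is_var_at x a p'
  | true :: p', Pair _ b | true :: p', Enc _ b => is_var_at x b p'
  | _ :: _, _ => false
  end.

Definition pos_x (x : V) (t : term) : position -> bool := is_var_at x t.

Fixpoint replace (t : term) (P : position -> bool) (r : term) : term :=
  if P [] then r else
  match t with
  | Pair a b => Pair (replace a (fun p => P (false :: p)) r)
                     (replace b (fun p => P (true :: p)) r)
  | Enc a b => Enc (replace a (fun p => P (false :: p)) r)
                   (replace b (fun p => P (true :: p)) r)
  | _ => t
  end.

Definition proper_prefix (q p : position) : Prop :=
  exists s, s <> [] /\ p = q ++ s.

Definition Qset (t : term) (p q : position) : Prop :=
  q = [] \/
  exists q0 (i : bool), q = q0 ++ [i] /\ inPos t q /\ proper_prefix q0 p.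

Definition abstractable (X : term -> Prop) (t : term) (p : position) : Prop :=
  inPos t p /\
  forall q, Qset t p q -> exists u, subterm_at t q = Some u /\ dy X u.

Definition of_list (S : list term) : term -> Prop := fun u => In u S.
Definition add_var (S : list term) (x : V) : term -> Prop :=
  fun u => In u S \/ u = Var x.

End DY.

(* Replacing every occurrence of the variable x in t by r is the substitution
   σ = {x ↦ r}.  Every position of t is a position of σ t, carrying the subterm
   σ (t|_q), and for p ∈ Pos(t) the sets Q_p computed in t and in σ t coincide.
   Since σ fixes S and S ⊢ r, a derivation S ∪ {x} ⊢ u maps to S ⊢ σ u, which
   gives one inclusion.  Conversely, let q ∈ Q_p with S ⊢ σ (t|_q).  If x does
   not occur in t|_q, then σ (t|_q) = t|_q.  Otherwise x sits at some position
   q·p' of t, and q ∈ Q_{q·p'}; as q·p' is abstractable for S ∪ {x}, we get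
   S ∪ {x} ⊢ t|_q. *)
From mathcomp Require Import all_boot.
From Stdlib Require Import List Classical.
Import ListNotations.

Section Positions.
Context {N : Type} {V : eqType}.
Implicit Types (t u : term N V) (p q s : position).

Lemma subterm_at_nil t : subterm_at t [] = Some t.
Proof. destruct t; reflexivity. Qed.

Lemma subterm_at_app t q s :
  subterm_at t (q ++ s) =
  match subterm_at t q with Some u => subterm_at u s | None => None end.
Proof.
  revert t; induction q as [|c q IH]; intros t.
  - destruct t; reflexivity.
  - destruct c, t; simpl; auto.
Qed.

Lemma inPos_nil t : inPos t [].
Proof. unfold inPos; rewrite subterm_at_nil; discriminate. Qed.

Lemma inPos_sibling {t q b s} i : inPos t (q ++ b :: s) -> inPos t (q ++ [i]).
Proof.
  unfold inPos; rewrite !subterm_at_app.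
  destruct (subterm_at t q) as [u|]; [|congruence].
  destruct u, b, i; simpl; rewrite ?subterm_at_nil; congruence.
Qed.

Lemma is_var_at_app (x : V) {t q u} s :
  subterm_at t q = Some u -> is_var_at x t (q ++ s) = is_var_at x u s.
Proof.
  revert t; induction q as [|c q IH]; intros t Hq.
  - rewrite subterm_at_nil in Hq; injection Hq as <-; reflexivity.
  - destruct c, t; simpl in *; try discriminate; auto.
Qed.

Lemma occurs_is_var_at {x : V} {u} : occurs x u -> exists p, is_var_at x u p = true.
Proof.
  induction u as [y|n|a IHa b IHb|a IHa b IHb]; simpl; intros Hx.
  - exists []; subst; apply eqxx.
  - contradiction.
  - destruct Hx as [Hx|Hx];
      [destruct (IHa Hx) as [p Hp]; exists (false :: p)
      |destruct (IHb Hx) as [p Hp]; exists (true :: p)]; auto.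
  - destruct Hx as [Hx|Hx];
      [destruct (IHa Hx) as [p Hp]; exists (false :: p)
      |destruct (IHb Hx) as [p Hp]; exists (true :: p)]; auto.
Qed.

Lemma Qset_inPos {t p q} : Qset t p q -> inPos t q.
Proof. intros [->|(q0 & i & _ & Hq & _)]; [apply inPos_nil|exact Hq]. Qed.

Lemma Qset_transfer {t t' p q} : inPos t p -> Qset t' p q -> Qset t p q.
Proof.
  intros Hp [->|(q0 & i & -> & _ & Hpre)]; [now left|right].
  exists q0, i; split; [reflexivity|split; [|exact Hpre]].
  destruct Hpre as ([|b s] & Hs & ->); [congruence|].
  exact (inPos_sibling i Hp).
Qed.

Lemma Qset_extend {t p q} s : Qset t p q -> Qset t (q ++ s) q.
Proof.
  intros [->|(q0 & i & -> & Hq & _)]; [now left|right].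
  exists q0, i; repeat split; auto.
  exists (i :: s); split; [discriminate|now rewrite <- app_assoc].
Qed.

End Positions.

Section Substitution.
Context {N : Type} {V : eqType}.
Variables (x : V) (r : term N V).

Fixpoint subst_var (t : term N V) : term N V :=
  match t with
  | Var y => if y == x then r else Var N y
  | Name n => Name V n
  | Pair a b => Pair (subst_var a) (subst_var b)
  | Enc a b => Enc (subst_var a) (subst_var b)
  end.

Lemma replace_pos_x (t : term N V) : replace t (pos_x x t) r = subst_var t.
Proof.
  unfold pos_x; induction t as [y|n|a IHa b IHb|a IHa b IHb]; simpl; auto;
    now rewrite <- IHa, <- IHb.
Qed.

Lemma subst_var_notin (u : term N V) : ~ occurs x u -> subst_var u = u.
Proof.
  induction u as [y|n|a IHa b IHb|a IHa b IHb]; simpl; intros Hx; auto.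
  - destruct (eqVneq y x) as [->|_]; [now exfalso; apply Hx|reflexivity].
  - rewrite IHa ?IHb; auto.
  - rewrite IHa ?IHb; auto.
Qed.

Lemma subterm_at_subst_var {t u : term N V} {q} :
  subterm_at t q = Some u -> subterm_at (subst_var t) q = Some (subst_var u).
Proof.
  revert t; induction q as [|c q IH]; intros t Hq.
  - rewrite subterm_at_nil in Hq; injection Hq as <-; apply subterm_at_nil.
  - destruct c, t; simpl in *; try discriminate; auto.
Qed.

Lemma inPos_subst_var {t : term N V} {q} : inPos t q -> inPos (subst_var t) q.
Proof.
  unfold inPos; destruct (subterm_at t q) as [u|] eqn:Hq; [|congruence].
  rewrite (subterm_at_subst_var Hq); discriminate.
Qed.

End Substitution.

Section Derivability.
Context {N : Type} {V : eqType} {isKey : N -> Prop} {inv : N -> N}.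
Implicit Types (X Y : term N V -> Prop) (S : list (term N V)) (t u r : term N V).

Lemma dy_subset {X Y u} : (forall v, X v -> Y v) -> dy isKey inv X u -> dy isKey inv Y u.
Proof.
  intros HXY Hu; induction Hu.
  - apply dy_ax; auto.
  - eapply dy_fst; eauto.
  - eapply dy_snd; eauto.
  - apply dy_pair; auto.
  - eapply dy_dec; eauto.
  - apply dy_enc; auto.
Qed.

Lemma dy_subst_var S x r u :
  dy isKey inv (of_list S) r -> (forall s, In s S -> ~ occurs x s) ->
  dy isKey inv (add_var S x) u -> dy isKey inv (of_list S) (subst_var x r u).
Proof.
  intros Hr HS Hu; induction Hu as [u [Hu| ->]| | | | |]; simpl.
  - rewrite subst_var_notin; auto. now apply dy_ax.
  - now rewrite eqxx.
  - eapply dy_fst; eauto.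
  - eapply dy_snd; eauto.
  - now apply dy_pair.
  - eapply dy_dec; eauto.
  - now apply dy_enc.
Qed.

Lemma abstractable_subst_var S x r t p :
  dy isKey inv (of_list S) r -> (forall s, In s S -> ~ occurs x s) ->
  abstractable isKey inv (add_var S x) t p ->
  abstractable isKey inv (of_list S) (subst_var x r t) p.
Proof.
  intros Hr HS [Hp HA]; split; [now apply inPos_subst_var|].
  intros q Hq.
  destruct (HA q (Qset_transfer Hp Hq)) as (u & Hu & Du).
  exists (subst_var x r u); split.
  - now apply subterm_at_subst_var.
  - now apply dy_subst_var.
Qed.

Section AbstractableVariable.
Context {S : list (term N V)} {x : V} {r t : term N V}.
Hypothesis pos_x_abstractable :
  forall p, pos_x x t p -> abstractable isKey inv (add_var S x) t p.

Lemma dy_add_var_of_subst_var {p q u} :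
  Qset t p q -> subterm_at t q = Some u ->
  dy isKey inv (of_list S) (subst_var x r u) -> dy isKey inv (add_var S x) u.
Proof.
  intros Hq Hu Du.
  destruct (classic (occurs x u)) as [Hx|Hx].
  - destruct (occurs_is_var_at Hx) as [s Hs].
    assert (Hqs : pos_x x t (q ++ s))
      by (unfold pos_x; rewrite (is_var_at_app x s Hu); exact Hs).
    destruct (pos_x_abstractable _ Hqs) as [_ HA].
    destruct (HA q (Qset_extend s Hq)) as (w & Hw & Dw).
    congruence.
  - rewrite subst_var_notin in Du; auto.
    apply (dy_subset (fun v Hv => or_introl Hv) Du).
Qed.

Lemma abstractable_of_subst_var {p} :
  inPos t p -> abstractable isKey inv (of_list S) (subst_var x r t) p ->
  abstractable isKey inv (add_var S x) t p.
Proof.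
  intros Hp [_ HA]; split; [exact Hp|].
  intros q Hq.
  destruct (HA q (Qset_transfer (inPos_subst_var x r Hp) Hq)) as (u' & Hu' & Du').
  pose proof (Qset_inPos Hq) as Hqt; unfold inPos in Hqt.
  destruct (subterm_at t q) as [u|] eqn:Hu; [|congruence].
  rewrite (subterm_at_subst_var x r Hu) in Hu'; injection Hu' as <-.
  exists u; split; [reflexivity|].
  exact (dy_add_var_of_subst_var Hq Hu Du').
Qed.

End AbstractableVariable.

End Derivability.

Theorem lemma1 (N : Type) (V : eqType) (isKey : N -> Prop) (inv : N -> N)
  (inv_key : forall k, isKey k -> isKey (inv k))
  (S : list (term N V)) (t r : term N V) (x : V) :
  (forall s, In s S -> wf isKey s) -> wf isKey t -> wf isKey r ->
  dy isKey inv (of_list S) r ->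
  (forall s, In s S -> ~ occurs x s) ->
  (forall p, pos_x x t p -> abstractable isKey inv (add_var S x) t p) ->
  forall p : position,
    (abstractable isKey inv (of_list S) (replace t (pos_x x t) r) p /\ inPos t p)
    <-> abstractable isKey inv (add_var S x) t p.
Proof.
  intros _ _ _ Hr HS HP p.
  rewrite replace_pos_x; split.
  - intros [HA Hp]; exact (abstractable_of_subst_var HP Hp HA).
  - intros HA; split; [now apply abstractable_subst_var|exact (proj1 HA)].
Qed.
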